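(* Let $K=\operatorname{cone}\{e_1,\dots,e_m\}\subset\mathbb{R}^m$ be a simplicial cone, and suppose there are pairwise distinct indices $i,j,k\in\{1,\dots,m\}$ with $\langle e_i,e_j\rangle<0$, $\langle e_i,e_k\rangle<0$ and $\langle e_j,e_k\rangle<0$. Then there is no proper cone $L$ such that $K$ is an $L$-isotone projection set.
   Context: $\mathbb{R}^m$ carries the standard inner product. A simplicial cone is $\operatorname{cone}\{e_1,\dots,e_m\}=\{\sum t^ie_i:t^i\ge0\}$ with $e_1,\dots,e_m$ linearly independent. A proper cone is a closed convex cone $L$ that is pointed and generating ($L-L=\mathbb{R}^m$). $x\le_L y$ means $y-x\in L$. $K$ is an $L$-isotone projection set if $x\le_L y$ implies $P_Kx\le_L P_Ky$, where $P_K$ is the metric projection onto $K$. *)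

From HB Require Import structures.
From mathcomp Require Import all_boot all_order all_algebra.
From mathcomp Require Import all_classical all_reals all_analysis.
Set Implicit Arguments. Unset Strict Implicit. Unset Printing Implicit Defensive.
Import Order.TTheory GRing.Theory Num.Theory.
Import numFieldNormedType.Exports.
Local Open Scope ring_scope.
Local Open Scope classical_set_scope.

Definition dotv (R : realType) (m : nat) (x y : 'rV[R]_m) : R :=
  \sum_(i < m) x 0 i * y 0 i.

Definition lin_indep (R : realType) (m : nat) (e : 'I_m -> 'rV[R]_m) : Prop :=
  forall t : 'I_m -> R, \sum_(i < m) t i *: e i = 0 -> forall i, t i = 0.

Definition cone_gen (R : realType) (m : nat) (e : 'I_m -> 'rV[R]_m) : set 'rV[R]_m :=
  [set x | exists t : 'I_m -> R, (forall i, 0 <= t i) /\ x = \sum_(i < m) t i *: e i].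

Definition proper_cone (R : realType) (m : nat) (L : set 'rV[R]_m) : Prop :=
  [/\ closed L,
      L 0,
      (forall x y a b, L x -> L y -> 0 <= a -> 0 <= b -> L (a *: x + b *: y)),
      (forall x, L x -> L (- x) -> x = 0) &
      (forall z, exists x y, [/\ L x, L y & z = x - y])].

Definition cone_le (R : realType) (m : nat) (L : set 'rV[R]_m) (x y : 'rV[R]_m) : Prop :=
  L (y - x).

Definition is_metric_proj (R : realType) (m : nat) (K : set 'rV[R]_m) (x p : 'rV[R]_m) : Prop :=
  K p /\ forall y, K y -> dotv (x - p) (x - p) <= dotv (x - y) (x - y).

Definition isotone_projection_set (R : realType) (m : nat) (L K : set 'rV[R]_m) : Prop :=
  forall x y p q, cone_le L x y -> is_metric_proj K x p -> is_metric_proj K y q ->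
    cone_le L p q.

(* For a generator e_i of K and z in L, isotonicity forces the orthogonal
   projection of z onto the line R e_i to lie in L: choose a point x whose
   projection onto K is a multiple of e_i and such that x + z projects onto
   another multiple of e_i.  Since L is generating, L contains e_i or -e_i, and
   pointedness then makes the sign s_i with s_i e_i in L satisfy
   s_i <z, e_i> >= 0 for every z in L.  Taking z = s_j e_j gives
   s_i s_j <e_i, e_j> >= 0, so obtuse generators carry opposite signs, which is
   impossible for three pairwise obtuse generators. *)
From HB Require Import structures.
From mathcomp Require Import all_boot all_order all_algebra.
From mathcomp Require Import all_classical all_reals all_analysis.
From mathcomp Require Import ring lra.
Set Implicit Arguments.
Unset Strict Implicit.
Unset Printing Implicit Defensive.
Import Order.TTheory GRing.Theory Num.Theory.
Import numFieldNormedType.Exports.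
Local Open Scope ring_scope.
Local Open Scope classical_set_scope.

Section InnerProduct.
Variables (R : realType) (m : nat).
Implicit Types (x y z : 'rV[R]_m).

Lemma dotvC x y : dotv x y = dotv y x.
Proof. by apply: eq_bigr => k _; rewrite mulrC. Qed.

Lemma dotvDl x y z : dotv (x + y) z = dotv x z + dotv y z.
Proof. by rewrite /dotv -big_split; apply: eq_bigr => k _; rewrite mxE mulrDl. Qed.

Lemma dotvZl (a : R) x y : dotv (a *: x) y = a * dotv x y.
Proof. by rewrite /dotv mulr_sumr; apply: eq_bigr => k _; rewrite mxE mulrA. Qed.

Lemma dotvNl x y : dotv (- x) y = - dotv x y.
Proof. by rewrite -scaleN1r dotvZl mulN1r. Qed.

Lemma dotvBl x y z : dotv (x - y) z = dotv x z - dotv y z.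
Proof. by rewrite dotvDl dotvNl. Qed.

Lemma dotv0l y : dotv 0 y = 0.
Proof. by rewrite -(scale0r 0) dotvZl mul0r. Qed.

Lemma dotvDr x y z : dotv z (x + y) = dotv z x + dotv z y.
Proof. by rewrite !(dotvC z) dotvDl. Qed.

Lemma dotvZr (a : R) x y : dotv y (a *: x) = a * dotv y x.
Proof. by rewrite !(dotvC y) dotvZl. Qed.

Lemma dotvBr x y z : dotv z (x - y) = dotv z x - dotv z y.
Proof. by rewrite !(dotvC z) dotvBl. Qed.

Lemma dotv_suml (I : finType) (f : I -> 'rV[R]_m) y :
  dotv (\sum_(t : I) f t) y = \sum_(t : I) dotv (f t) y.
Proof.
apply: (big_ind2 (fun a b => dotv a y = b)) => //; first exact: dotv0l.
by move=> a b c d <- <-; rewrite dotvDl.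
Qed.

Lemma dotv_ge0 x : 0 <= dotv x x.
Proof. by apply: sumr_ge0 => k _; rewrite -expr2 sqr_ge0. Qed.

Lemma dotv_gt0 x : x != 0 -> 0 < dotv x x.
Proof.
apply: contraNT; rewrite -leNgt => x_le0; apply/eqP/rowP => k; rewrite mxE.
have x_eq0 : dotv x x = 0 by apply/eqP; rewrite eq_le x_le0 dotv_ge0.
have sq_ge0 (l : 'I_m) : true -> 0 <= x 0 l * x 0 l by rewrite -expr2 sqr_ge0.
by move: (psumr_eq0P sq_ge0 x_eq0 (i := k) isT) => /eqP; rewrite mulf_eq0 orbb => /eqP.
Qed.

End InnerProduct.

Section SimplicialCone.
Variables (R : realType) (m : nat) (e : 'I_m -> 'rV[R]_m).
Hypothesis e_indep : lin_indep e.

Lemma lin_indep_neq0 i : e i != 0.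
Proof.
apply/eqP => ei0.
have sum0 : \sum_(t < m) (t == i)%:R *: e t = 0.
  rewrite (bigD1 i) //= ei0 scaler0 add0r big1 // => t /negbTE ->.
  exact: scale0r.
by have /eqP := e_indep sum0 i; rewrite eqxx oner_eq0.
Qed.

(* the rows e_i form an invertible matrix, so <n, e_t> = b t is solvable *)
Lemma lin_indep_dual (b : 'I_m -> R) : exists n, forall t, dotv n (e t) = b t.
Proof.
pose E := \matrix_(t < m) e t.
have E_free : row_free E.
  rewrite -kermx_eq0; apply/eqP/row_matrixP => r; rewrite row0.
  have : kermx E *m E = 0 by apply/eqP; rewrite -sub_kermx submx_refl.
  move=> /(congr1 (row r)); rewrite row_mul row0 mulmx_sum_row => kerE.
  have comb0 : \sum_(s < m) row r (kermx E) 0 s *: e s = 0.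
    by rewrite -[RHS]kerE; apply: eq_bigr => s _; rewrite rowK.
  by apply/rowP => t; rewrite [RHS]mxE (e_indep comb0).
have ET_unit : E^T \in unitmx by rewrite unitmx_tr -row_free_unit.
exists ((\row_t b t) *m invmx E^T) => t.
have := mulmxKV ET_unit (\row_t b t).
move=> /(congr1 (fun M : 'rV[R]_m => M 0 t)); rewrite mxE => <-.
by rewrite mxE; apply: eq_bigr => k _; rewrite !mxE.
Qed.

Lemma cone_gen_ray i (a : R) : 0 <= a -> cone_gen e (a *: e i).
Proof.
move=> a_ge0; exists (fun t => if t == i then a else 0); split.
  by move=> t; case: eqP.
rewrite (bigD1 i) //= eqxx big1 ?addr0 // => t /negbTE ->; exact: scale0r.
Qed.

(* sufficiency of the Kuhn-Tucker conditions *)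
Lemma is_metric_proj_cone_gen x p :
  cone_gen e p -> (forall t, dotv (x - p) (e t) <= 0) -> dotv (x - p) p = 0 ->
  is_metric_proj (cone_gen e) x p.
Proof.
move=> Kp normal orth; split => // _ [s [s_ge0 ->]].
set y := \sum_(i < m) s i *: e i.
have xp_y_le0 : dotv (x - p) y <= 0.
  rewrite dotvC dotv_suml; apply: sumr_le0 => t _.
  by rewrite dotvZl dotvC mulr_ge0_le0.
have -> : x - y = (x - p) + (p - y) by rewrite addrA subrK.
have := dotv_ge0 (p - y).
rewrite (dotvDl (x - p)) !(dotvDr (x - p) (p - y)) (dotvC (p - y) (x - p)).
rewrite [dotv (x - p) (p - y)]dotvBr orth.
lra.
Qed.

End SimplicialCone.

Section ConvexCone.
Variables (R : realType) (m : nat) (L : set 'rV[R]_m).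
Hypothesis L_conic :
  forall x y a b, L x -> L y -> 0 <= a -> 0 <= b -> L (a *: x + b *: y).
Hypothesis L0 : L 0.

Lemma cone_scale (a : R) v : 0 <= a -> L v -> L (a *: v).
Proof.
move=> a_ge0 Lv; have := L_conic Lv L0 a_ge0 (lexx 0).
by rewrite scaler0 addr0.
Qed.

Lemma cone_scale_pos (c : R) v : 0 < c -> L (c *: v) -> L v.
Proof.
move=> c_gt0; have cV_ge0 : 0 <= c^-1 by rewrite invr_ge0 ltW.
move=> /(cone_scale cV_ge0).
by rewrite scalerA mulVf ?scale1r // gt_eqF.
Qed.

Lemma cone_scale_neg (c : R) v : c < 0 -> L (c *: v) -> L (- v).
Proof.
move=> c_lt0 Lcv; apply: (cone_scale_pos (c := - c)); first by rewrite oppr_gt0.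
by rewrite scaleNr scalerN opprK.
Qed.

Variable e : 'I_m -> 'rV[R]_m.
Hypothesis e_indep : lin_indep e.
Hypothesis isoK : isotone_projection_set L (cone_gen e).

Lemma isotone_proj_ray i z :
  L z -> L ((dotv z (e i) / dotv (e i) (e i)) *: e i).
Proof.
move=> Lz; set c := dotv z (e i) / dotv (e i) (e i).
have ei_gt0 := dotv_gt0 (lin_indep_neq0 e_indep i).
have [n n_dual] := lin_indep_dual e_indep (fun t => if t == i then 0 else -1).
pose w t := dotv (z - c *: e i) (e t).
have wi : w i = 0 by rewrite /w dotvBl dotvZl /c divfK ?subrr // gt_eqF.
pose M := \sum_t `|w t|.
have M_ge0 : 0 <= M by apply: sumr_ge0 => t _.
have w_le_M t : w t <= M.
  rewrite (le_trans (ler_norm _)) // /M (bigD1 t) //= lerDl.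
  exact: sumr_ge0.
(* x projects onto |c| e_i and x + z onto (|c| + c) e_i *)
pose x := `|c| *: e i + M *: n.
have -> : c *: e i = (`|c| + c) *: e i - `|c| *: e i.
  by rewrite scalerDl addrAC subrr add0r.
apply: (isoK (x := x) (y := x + z)).
- by rewrite /cone_le addrAC subrr add0r.
- have x_sub : x - `|c| *: e i = M *: n by rewrite /x addrAC subrr add0r.
  apply: is_metric_proj_cone_gen; rewrite ?x_sub; first exact: cone_gen_ray.
    move=> t; rewrite dotvZl n_dual; case: eqP => _; first by rewrite mulr0.
    by rewrite mulrN1 oppr_le0.
  by rewrite dotvZr dotvZl n_dual eqxx !mulr0.
- have xz_sub : x + z - (`|c| + c) *: e i = M *: n + (z - c *: e i).
    by apply/rowP => k; rewrite /x !mxE; ring.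
  have dot_et t : dotv (M *: n + (z - c *: e i)) (e t) =
      M * (if t == i then 0 else -1) + w t.
    by rewrite dotvDl dotvZl n_dual.
  apply: is_metric_proj_cone_gen; rewrite ?xz_sub.
  + by apply: cone_gen_ray; have := ler_norm (- c); rewrite normrN; lra.
  + move=> t; rewrite dot_et; case: eqP => [->|_].
      by rewrite wi mulr0 addr0.
    by have := w_le_M t; lra.
  + by rewrite dotvZr dot_et eqxx wi mulr0 addr0 mulr0.
Qed.

Lemma generating_signed_generator i :
  (forall z, exists x y, [/\ L x, L y & z = x - y]) ->
  exists b : bool, L ((-1) ^+ b *: e i).
Proof.
move=> L_gen; have [x [y [Lx Ly ei_eq]]] := L_gen (e i).
have ei_gt0 := dotv_gt0 (lin_indep_neq0 e_indep i).
have : dotv (e i) (e i) = dotv x (e i) - dotv y (e i) by rewrite {1}ei_eq dotvBl.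
have [x_gt0 _|x_le0 ei_eq'] := ltrP 0 (dotv x (e i)).
  exists false; rewrite expr0 scale1r.
  by apply: cone_scale_pos (isotone_proj_ray i Lx); rewrite divr_gt0.
exists true; rewrite expr1 scaleN1r.
apply: cone_scale_neg (isotone_proj_ray i Ly).
by rewrite pmulr_llt0 ?invr_gt0 //; lra.
Qed.

Hypothesis L_pointed : forall x, L x -> L (- x) -> x = 0.

Lemma signed_generator_dot_ge0 i (b : bool) z :
  L ((-1) ^+ b *: e i) -> L z -> 0 <= (-1) ^+ b * dotv z (e i).
Proof.
set u := (-1) ^+ b *: e i => Lu Lz; rewrite leNgt; apply/negP => dot_lt0.
have ei_gt0 := dotv_gt0 (lin_indep_neq0 e_indep i).
have sign2 : (-1) ^+ b * (-1) ^+ b = 1 :> R by rewrite -expr2 sqrr_sign.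
have u_eq0 : u = 0.
  apply: L_pointed => //; apply: (cone_scale_neg (c := (-1) ^+ b *
    (dotv z (e i) / dotv (e i) (e i)))).
    by rewrite mulrA pmulr_llt0 // invr_gt0.
  by rewrite /u scalerA mulrAC sign2 mul1r; apply: isotone_proj_ray.
have : e i = (-1) ^+ b *: u by rewrite /u scalerA sign2 scale1r.
by rewrite u_eq0 scaler0; apply/eqP/lin_indep_neq0.
Qed.

Lemma obtuse_signed_generators i j (bi bj : bool) :
  dotv (e i) (e j) < 0 ->
  L ((-1) ^+ bi *: e i) -> L ((-1) ^+ bj *: e j) -> bi != bj.
Proof.
move=> obtuse Li /(signed_generator_dot_ge0 Li); apply: contraTneq => <-.
by rewrite dotvZl mulrA -expr2 sqrr_sign mul1r dotvC -ltNge.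
Qed.

End ConvexCone.

Theorem corollary2 (R : realType) (m : nat) (e : 'I_m -> 'rV[R]_m)
  (i j k : 'I_m) :
  lin_indep e ->
  i != j -> i != k -> j != k ->
  dotv (e i) (e j) < 0 -> dotv (e i) (e k) < 0 -> dotv (e j) (e k) < 0 ->
  ~ exists L : set 'rV[R]_m,
      proper_cone L /\ isotone_projection_set L (cone_gen e).
Proof.
move=> e_indep _ _ _ eij eik ejk [L [[_ L0 L_conic L_pointed L_gen] isoK]].
have [bi Li] := generating_signed_generator L_conic L0 e_indep isoK i L_gen.
have [bj Lj] := generating_signed_generator L_conic L0 e_indep isoK j L_gen.
have [bk Lk] := generating_signed_generator L_conic L0 e_indep isoK k L_gen.
have := obtuse_signed_generators L_conic L0 e_indep isoK L_pointed eij Li Lj.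
have := obtuse_signed_generators L_conic L0 e_indep isoK L_pointed eik Li Lk.
have := obtuse_signed_generators L_conic L0 e_indep isoK L_pointed ejk Lj Lk.
by clear Li Lj Lk; case: bi bj bk => [] [] [].
Qed.
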